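(* There exist universal constants $0<c\le C$ such that for all integers $n\ge k\ge 2$ and $r\ge 0$, \[ c\,k(\log(n/k)+r+1)\le \mathsf{opt}_{\operatorname{bandit}}^{\operatorname{det}}(n,k,r)\le C\,k(\log(n/k)+r+1). \]
   Context: Prediction with expert advice: $\mathcal{Y}=\{1,\dots,k\}$, $\mathcal{X}=[k]^n$, experts $h_i(x)=x_i$ for $i=1,\dots,n$. For $r\ge 0$ let $\mathcal{P}_r$ be the set of finite sequences of examples in $\mathcal{X}\times\mathcal{Y}$ on which some $h_i$ errs ($h_i(x)\ne y$) on at most $r$ examples. Online learning with bandit feedback: in rounds $t=1,2,\dots$ the adversary presents $x_t$, a deterministic learner predicts $\hat y_t$ as a function of past observations and $x_t$, and observes only whether $\hat y_t$ equals the true label $y_t$; a mistake is $\hat y_t\ne y_t$. $\mathsf{opt}_{\operatorname{bandit}}^{\operatorname{det}}(n,k,r)$ is the infimum over deterministic learners of the supremum over sequences $S\in\mathcal{P}_r$ of the number of mistakes (equivalently, over adversaries whose bandit feedback is consistent with some expert being inconsistent with the feedback in at most $r$ rounds). *)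

From HB Require Import structures.
From mathcomp Require Import all_boot all_order all_algebra.
From mathcomp Require Import all_classical all_reals all_analysis.
From mathcomp Require Import Rstruct.
Set Implicit Arguments. Unset Strict Implicit. Unset Printing Implicit Defensive.
Import Order.TTheory GRing.Theory Num.Theory.
Local Open Scope classical_set_scope.
Local Open Scope ring_scope.

(* Labels Y = {1..k} are represented by 'I_k = {0..k-1}; instances X = [k]^n
   by finite functions 'I_n -> 'I_k. Expert i predicts h_i(x) = x i. *)
Definition inst (n k : nat) := {ffun 'I_n -> 'I_k}.
Definition example (n k : nat) := (inst n k * 'I_k)%type.

Definition expert_mistakes (n k : nat) (i : 'I_n) (S : seq (example n k)) : nat :=
  count (fun e : example n k => e.1 i != e.2) S.

Definition P_r (n k r : nat) : set (seq (example n k)) :=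
  [set S | exists i : 'I_n, (expert_mistakes i S <= r)%N].

Definition observation (n k : nat) := (inst n k * 'I_k * bool)%type.

Definition learner (n k : nat) := seq (observation n k) -> inst n k -> 'I_k.

Fixpoint run_mistakes (n k : nat) (L : learner n k) (h : seq (observation n k))
    (S : seq (example n k)) : nat :=
  match S with
  | [::] => 0%N
  | e :: S' =>
      let yhat := L h e.1 in
      ((yhat != e.2) + run_mistakes L (rcons h (e.1, yhat, yhat == e.2)) S')%N
  end.

Definition mistakes (n k : nat) (L : learner n k) (S : seq (example n k)) : nat :=
  run_mistakes L [::] S.

Definition opt_bandit_det (n k r : nat) : \bar Rdefinitions.R :=
  ereal_inf [set ereal_sup [set ((mistakes L S)%:R)%:E | S in @P_r n k r]
            | L in [set: learner n k]].

From HB Require Import structures.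
From mathcomp Require Import all_boot all_order all_algebra.
From mathcomp Require Import all_classical all_reals all_analysis.
From mathcomp Require Import Rstruct.
From mathcomp Require Import zify ring lra.
Import Order.TTheory GRing.Theory Num.Theory.
Set Implicit Arguments. Unset Strict Implicit. Unset Printing Implicit Defensive.

(* Lower bound: two adversaries. The first keeps a set V of experts that have
   been perfect so far, spreads V evenly over the k labels and always answers
   "wrong", so each mistake discards at most ceil(|V|/k) experts; starting from
   k 2^j experts it forces k/2 mistakes per halving of V, about
   (k/2) log2(n/k) in all. The second repeats one instance on which every label
   is predicted by some expert, again always answering "wrong": after
   k(r+1) - 1 rounds some label was predicted at most r times, and the expert
   predicting it erred only in those rounds.
   Upper bound: weighted majority with weight 2^(r - e_i), where e_i counts
   the rounds in which expert i contradicted the feedback. The predicted label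
   carries at least 1/k of the total weight W, so a mistake lowers W by at
   least 1 and multiplies it by at most 1 - 1/(2k), while the best expert keeps
   W >= 1. From W = n 2^r this leaves at most 2k ln(n 2^r / 2k) mistakes while
   W > 2k and at most 2k afterwards; [potential] is this bound. *)

Lemma leq_divD_addr (k m d : nat) : 0 < k -> (m + d) %/ k <= m %/ k + d.
Proof. move=> k0; nia. Qed.

Lemma sum_count_mem (T : finType) (s : seq T) : \sum_(c : T) count_mem c s = size s.
Proof.
elim: s => [|a s IH] /=; first by rewrite big1.
rewrite big_split /= IH (bigD1 a) //= eqxx big1 ?addn0 ?add1n // => c.
by rewrite eq_sym => /negbTE ->.
Qed.

Lemma exists_count_mem_le (T : finType) (r : nat) (s : seq T) :
  size s < #|T| * r.+1 -> exists c, count_mem c s <= r.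
Proof.
move=> hs; case: (pickP (fun c => count_mem c s <= r)) => [c hc|H]; first by exists c.
exfalso; move: hs; rewrite -sum_count_mem ltnNge => /negP; apply.
rewrite -sum_nat_const; apply: leq_sum => c _.
by move/negbT: (H c); rewrite -ltnNge.
Qed.

Lemma exists_pow2_between (k n : nat) : 0 < k -> k <= n ->
  exists2 j, k * 2 ^ j <= n & n < k * 2 ^ j.+1.
Proof.
move=> k0 kn; have nk0 : 0 < n %/ k by rewrite divn_gt0.
exists (trunc_log 2 (n %/ k)).
  by rewrite mulnC -leq_divRL // trunc_logP.
by rewrite mulnC -ltn_divLR // trunc_log_ltn.
Qed.

Lemma halving_repeated_sum (K j r : nat) : 1 < K ->
  K * (j + r + 2) <= 8 * (K./2 * j + (K * r.+1 - 1)).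
Proof.
have := odd_double_half K; rewrite -muln2.
have : odd K <= 1 by case: odd.
nia.
Qed.

Section VersionSpaceAdversary.
Variables (n k : nat) (L : learner n k.+1).
Local Notation K := k.+1.

Definition forces_mistakes (T m : nat) :=
  forall (h : seq (observation n K)) (V : {set 'I_n}), m <= #|V| ->
  exists S (i : 'I_n),
    [/\ i \in V, expert_mistakes i S = 0 & T <= run_mistakes L h S].

Lemma forces_mistakes0 : forces_mistakes 0 1.
Proof. by move=> h V; rewrite card_gt0 => /set0Pn [i iV]; exists [::], i. Qed.

Lemma forces_mistakes_le T m m' : m <= m' ->
  forces_mistakes T m -> forces_mistakes T m'.
Proof. by move=> le_mm' HT h V hV; apply: HT; apply: leq_trans hV. Qed.

Definition spread (V : {set 'I_n}) : inst n K :=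
  [ffun i => inord (index i (enum V) %% K)].

Lemma card_spread_eq (V : {set 'I_n}) (y : 'I_K) :
  #|[set i in V | spread V i == y]| <= (#|V| + k) %/ K.
Proof.
set R := [set i in V | _]; set q := (#|V| + k) %/ K.
pose idx i := index i (enum V).
have idx_lt i : i \in V -> idx i < #|V| by rewrite cardE index_mem mem_enum.
suff : size (map idx (enum R)) <= size [seq y + t * K | t <- iota 0 q].
  by rewrite !size_map size_iota cardE.
apply: uniq_leq_size.
  rewrite map_inj_in_uniq ?enum_uniq // => i j; rewrite !mem_enum !inE.
  by move=> /andP[iV _] /andP[jV _]; apply: (index_inj i); rewrite mem_enum.
move=> z /mapP[i]; rewrite mem_enum inE => /andP[iV /eqP yi] ->.
have idx_mod : idx i %% K = y by rewrite -yi ffunE inordK // ltn_mod.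
apply/mapP; exists (idx i %/ K); last by rewrite -idx_mod addnC -divn_eq.
have : (idx i + 1 * K) %/ K <= q by apply: leq_div2r; have := idx_lt i iV; lia.
by rewrite mem_iota divnDMl // addn1.
Qed.

Lemma forces_mistakes_step T m m' : m' + (m + k) %/ K <= m ->
  forces_mistakes T m' -> forces_mistakes T.+1 m.
Proof.
move=> hm HT h V hV.
pose x := spread V; pose yh := L h x.
pose R := [set i in V | x i == yh].
have RV : R \subset V by apply/fintype.subsetP => i; rewrite inE => /andP[].
have cardR : #|R| <= (#|V| + k) %/ K := card_spread_eq V yh.
have cardVR : m' <= #|V :\: R|.
  rewrite cardsD (finset.setIidPr RV).
  have := leq_divD_addr (m + k) (#|V| - m) (ltn0Sn k).
  have -> : m + k + (#|V| - m) = #|V| + k by lia.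
  lia.
have [S [i [iVR em le_TS]]] := HT (rcons h (x, yh, false)) _ cardVR.
move: iVR; rewrite !inE => /andP[/nandP[/negP//|xi_yh] iV].
exists ((x, x i) :: S), i; split => //; first by rewrite /expert_mistakes /= eqxx.
by rewrite /= -/yh eq_sym (negbTE xi_yh).
Qed.

Lemma forces_mistakes_phase T m c p : (m + p * c + k) %/ K <= c ->
  forces_mistakes T m -> forces_mistakes (T + p) (m + p * c).
Proof.
elim: p => [|p IH] hc HT; first by rewrite addn0 mul0n addn0.
rewrite addnS; apply: (forces_mistakes_step (m' := m + p * c)); last first.
  apply: IH HT; apply: leq_trans hc; apply: leq_div2r; rewrite mulSn; lia.
move: hc; rewrite mulSn; lia.
Qed.

Lemma forces_mistakes_pow2 j : forces_mistakes (K./2 * j) (K * 2 ^ j).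
Proof.
elim: j => [|j IH].
  by rewrite muln0 expn0 muln1; apply: forces_mistakes_le forces_mistakes0.
have half_le : K./2 * 2 <= K by rewrite muln2 -{2}(odd_double_half K) leq_addl.
have phase_le : K * 2 ^ j + K./2 * 2 ^ j.+1 <= K * 2 ^ j.+1.
  by rewrite expnS; have := leq_mul half_le (leqnn (2 ^ j)); nia.
rewrite mulnS addnC; apply: (forces_mistakes_le phase_le).
apply: forces_mistakes_phase IH.
apply: leq_trans (leq_div2r K (leq_add phase_le (leqnn k))) _.
by rewrite mulnC divnMDl // divn_small ?addn0.
Qed.

Lemma adversary_halving r j : K * 2 ^ j <= n ->
  exists2 S, @P_r n K r S & K./2 * j <= mistakes L S.
Proof.
move=> hn; have hV : K * 2 ^ j <= #|[set: 'I_n]| by rewrite cardsT card_ord.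
have [S [i [_ em le_jS]]] := @forces_mistakes_pow2 j [::] _ hV.
by exists S => //; exists i; rewrite em.
Qed.

End VersionSpaceAdversary.

Section RepeatedInstanceAdversary.
Variables (n k r : nat) (L : learner n k.+2).
Local Notation K := k.+2.

Definition cyclic_inst : inst n K := [ffun i : 'I_n => inord (i %% K)].

Fixpoint predictions (h : seq (observation n K)) (t : nat) : seq 'I_K :=
  if t is t'.+1 then
    L h cyclic_inst :: predictions (rcons h (cyclic_inst, L h cyclic_inst, false)) t'
  else [::].

Lemma size_predictions h t : size (predictions h t) = t.
Proof. by elim: t h => [|t IH] h //=; rewrite IH. Qed.

Lemma run_mistakes_predictions (lab : 'I_K -> 'I_K) : (forall y, lab y != y) ->
  forall t h, run_mistakes L h [seq (cyclic_inst, lab y) | y <- predictions h t] = t.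
Proof.
move=> lab_neq; elim=> [|t IH] h //=.
by rewrite eq_sym (negbTE (lab_neq _)) IH.
Qed.

Lemma adversary_repeated : K <= n ->
  exists2 S, @P_r n K r S & K * r.+1 - 1 <= mistakes L S.
Proof.
move=> hn; pose s := predictions [::] (K * r.+1 - 1).
have [c rare_c] : exists c, count_mem c s <= r.
  apply: exists_count_mem_le.
  by rewrite card_ord size_predictions subn1 ltn_predL muln_gt0.
pose other : 'I_K := if c == ord0 then ord_max else ord0.
pose lab (y : 'I_K) := if y == c then other else c.
have lab_neq y : lab y != y.
  rewrite /lab /other; have [->|] := eqVneq y c; last by rewrite eq_sym.
  by have [->|] := eqVneq c ord0; last rewrite eq_sym.
exists [seq (cyclic_inst, lab y) | y <- s]; last first.
  by rewrite /mistakes run_mistakes_predictions.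
pose e : 'I_n := Ordinal (leq_trans (ltn_ord c) hn).
have inst_e : cyclic_inst e = c.
  by apply: val_inj; rewrite ffunE /= inordK ?modn_small ?ltn_mod.
exists e; rewrite /expert_mistakes count_map; apply: leq_trans rare_c.
apply: eq_leq; apply: eq_count => y /=; rewrite inst_e.
have [->|yc] := eqVneq y c; first by rewrite eq_sym lab_neq.
by rewrite /lab (negbTE yc) eqxx.
Qed.

End RepeatedInstanceAdversary.

Local Open Scope ring_scope.

Section Potential.
Variable R : realType.

Lemma ln_le_subr1 (x : R) : 0 < x -> ln x <= x - 1.
Proof. by move=> x0; have := @le_ln1Dx _ (x - 1); rewrite subrKC; apply; lra. Qed.

Lemma ln2_le1 : ln (2 : R) <= 1.
Proof. by have := @ln_le_subr1 2 ltac:(lra); lra. Qed.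

Lemma ln_div_ge0 (a b : R) : 0 < b -> b <= a -> 0 <= ln (a / b).
Proof. by move=> b0 ba; apply: ln_ge0; rewrite ler_pdivlMr // mul1r. Qed.

Definition potential (c w : R) : R := if w <= c then w else c + c * ln (w / c).

Lemma potential_ge0 (c w : R) : 0 < c -> 0 <= w -> 0 <= potential c w.
Proof.
rewrite /potential => c_gt0 w0; case: (leP w c) => // /ltW cw.
by have := mulr_ge0 (ltW c_gt0) (ln_div_ge0 c_gt0 cw); lra.
Qed.

Lemma le_potential (c a b : R) : 0 < c -> 0 <= a -> a <= b ->
  potential c a <= potential c b.
Proof.
rewrite /potential => c_gt0 a0 ab.
case: (leP b c) => [bc|cb]; first by rewrite (le_trans ab bc).
have lnb0 := ln_div_ge0 c_gt0 (ltW cb).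
case: (leP a c) => [ac|ca]; first by have := mulr_ge0 (ltW c_gt0) lnb0; lra.
have : ln (a / c) <= ln (b / c).
  by rewrite ler_ln ?posrE ?divr_gt0 ?ler_pM2r ?invr_gt0 //; lra.
by move/(ler_wpM2l (ltW c_gt0)); lra.
Qed.

Lemma ln_ge_subV (x : R) : 0 < x -> 1 - x^-1 <= ln x.
Proof.
move=> x0; have := @ln_le_subr1 x^-1.
by rewrite invr_gt0 lnV ?posrE //; lra.
Qed.

Lemma potential_step (c a b : R) : 0 < c -> 0 <= a -> a + 1 <= b ->
  c * a + b <= c * b -> potential c a + 1 <= potential c b.
Proof.
rewrite /potential => c0 a0 ab hab.
case: (leP b c) => [bc|cb]; first by rewrite ifT //; lra.
have b0 : 0 < b by lra.
case: (leP a c) => [ac|ca].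
  have := ln_ge_subV (divr_gt0 b0 c0); rewrite invf_div.
  have -> : 1 - c / b = (b - c) / b by field; rewrite gt_eqF.
  move/(ler_wpM2l (ltW c0)); rewrite mulrA.
  suff : a + 1 - c <= c * (b - c) / b by lra.
  have : 0 <= (c - a) * (b - c) by apply: mulr_ge0; lra.
  by rewrite ler_pdivlMr //; nra.
have a0' : 0 < a by lra.
have -> : ln (b / c) = ln (a / c) + ln (b / a).
  by rewrite -lnM ?posrE ?divr_gt0 //; congr ln; field; rewrite !gt_eqF.
have := ln_ge_subV (divr_gt0 b0 a0'); rewrite invf_div.
have -> : 1 - a / b = (b - a) / b by field; rewrite gt_eqF.
move/(ler_wpM2l (ltW c0)); rewrite mulrA.
suff : 1 <= c * (b - a) / b by lra.
by rewrite ler_pdivlMr //; lra.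
Qed.

Lemma potential_le_log (a m : R) r : 0 < a -> a <= m ->
  potential (2 * a) (m * 2 ^+ r) <= 2 * a * (ln (m / a) + r%:R + 1).
Proof.
move=> a0 am; have m0 : 0 < m by lra.
have lnma0 := ln_div_ge0 a0 am.
have ln2_0 : 0 <= ln (2 : R) by apply: ln_ge0; lra.
have ln2_1 := ln2_le1.
have r0 : 0 <= r%:R :> R by [].
rewrite /potential; case: (leP (m * 2 ^+ r) (2 * a)) => [small|_].
  by apply: le_trans small _; rewrite -{1}(mulr1 (2 * a)) ler_pM2l; lra.
have -> : ln (m * 2 ^+ r / (2 * a)) = ln (m / a) + ln 2 * r%:R - ln 2.
  have -> : m * 2 ^+ r / (2 * a) = m / a * (2 ^+ r / 2) by field; rewrite gt_eqF.
  rewrite lnM ?posrE ?divr_gt0 ?exprn_gt0 // -addrA; congr (_ + _).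
  by rewrite ln_div ?posrE ?exprn_gt0 // lnXn // mulr_natr.
have : ln 2 * r%:R <= r%:R :> R by rewrite ler_piMl.
nra.
Qed.

End Potential.

Section WeightedMajority.
Variables (n k r : nat).
Local Notation K := k.+1.
Local Open Scope nat_scope.

Definition inconsistent (i : 'I_n) (o : observation n K) : bool :=
  let: (x, yh, correct) := o in if correct then x i != yh else x i == yh.

Definition inconsistencies i (h : seq (observation n K)) := count (inconsistent i) h.

Definition weight i h : nat :=
  if inconsistencies i h <= r then 2 ^ (r - inconsistencies i h) else 0.

Definition label_weight h (x : inst n K) (y : 'I_K) : nat :=
  \sum_(i | x i == y) weight i h.

Definition total_weight h : nat := \sum_i weight i h.

Definition weighted_majority : learner n K :=
  fun h x => [arg max_(y > ord0) label_weight h x y].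

Lemma weight_rcons i h o :
  2 * weight i (rcons h o) <= (if inconsistent i o then weight i h else 2 * weight i h).
Proof.
rewrite /weight /inconsistencies -cats1 count_cat /= addn0.
case: (inconsistent i o); last by rewrite addn0.
rewrite addn1; case: leqP => // lt_r.
by rewrite (ltnW lt_r) -expnS subnSK.
Qed.

Lemma total_weight_nil : total_weight [::] = n * 2 ^ r.
Proof.
rewrite /total_weight (eq_bigr (fun=> 2 ^ r)) ?sum_nat_const ?card_ord //.
by move=> i _; rewrite /weight /inconsistencies subn0.
Qed.

Lemma total_weight_rcons h o : total_weight (rcons h o) <= total_weight h.
Proof.
apply: leq_sum => i _; have := weight_rcons i h o.
by case: (inconsistent i o); lia.
Qed.

Lemma total_weight_wrong (h : seq (observation n K)) x y :
  2 * total_weight (rcons h (x, y, false)) + label_weight h x y <= 2 * total_weight h.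
Proof.
rewrite /total_weight /label_weight !big_distrr [X in _ + X <= _]big_mkcond -big_split.
apply: leq_sum => i _ /=; have := weight_rcons i h (x, y, false) => /=.
by case: (x i == y); lia.
Qed.

Lemma total_weight_le_majority h x :
  total_weight h <= K * label_weight h x (weighted_majority h x).
Proof.
set y0 := weighted_majority h x.
have -> : K * label_weight h x y0 = \sum_(y : 'I_K) label_weight h x y0.
  by rewrite sum_nat_const card_ord.
rewrite /total_weight (partition_big x xpredT) //=.
apply: leq_sum => y _; rewrite /y0 /weighted_majority.
by case: arg_maxnP => // z _; apply.
Qed.

Lemma total_weight_gt0 b h : inconsistencies b h <= r -> 0 < total_weight h.
Proof.
move=> hb; rewrite /total_weight (bigD1 b) //= /weight hb.
by rewrite addn_gt0 expn_gt0.
Qed.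

Lemma total_weight_mistake b h x : inconsistencies b h <= r ->
  let W' := total_weight (rcons h (x, weighted_majority h x, false)) in
  W' + 1 <= total_weight h /\ 2 * K * W' + total_weight h <= 2 * K * total_weight h.
Proof.
move=> /total_weight_gt0 W0 /=.
have := total_weight_wrong h x (weighted_majority h x).
have := total_weight_le_majority h x.
split; nia.
Qed.

Lemma inconsistencies_rcons b h x (yh y : 'I_K) :
  inconsistencies b (rcons h ((x, yh, yh == y) : observation n K))
    <= inconsistencies b h + (x b != y).
Proof.
rewrite /inconsistencies -cats1 count_cat /= addn0 leq_add2l.
have [->|ne_y] := eqVneq yh y => //=.
by case: eqP => // ->; rewrite ne_y.
Qed.

Lemma weighted_majority_run_le (R : realType) b S h :
  inconsistencies b h + expert_mistakes b S <= r ->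
  ((run_mistakes weighted_majority h S)%:R
    <= potential (2 * K)%:R (total_weight h)%:R :> R)%R.
Proof.
have c0 : (0 < (2 * K)%:R :> R)%R by rewrite ltr0n.
elim: S h => [|[x y] S IH] h hb /=; first exact: potential_ge0.
set yh := weighted_majority h x.
have hbh : inconsistencies b h <= r by move: hb; lia.
have {}IH : ((run_mistakes weighted_majority (rcons h (x, yh, yh == y)) S)%:R
    <= potential (2 * K)%:R (total_weight (rcons h (x, yh, yh == y)))%:R :> R)%R.
  apply: IH; move: hb; rewrite /expert_mistakes /=.
  by have := inconsistencies_rcons b h x yh y; lia.
move: IH; have [_|ne_y] := eqVneq yh y => /= IH.
  apply: le_trans IH _; apply: le_potential => //.
  by rewrite ler_nat total_weight_rcons.
rewrite add1n -addn1 natrD.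
have [W'_lt W'_frac] := total_weight_mistake x hbh.
apply: le_trans (potential_step c0 _ _ _); first by rewrite lerD2r; exact: IH.
- by [].
- by move: W'_lt; rewrite -(ler_nat R) natrD.
- by rewrite -!natrM -natrD ler_nat.
Qed.

End WeightedMajority.

Lemma ln_ratio_le (R : realType) (k n j : nat) : (0 < k)%N -> (0 < n)%N ->
  (n < k * 2 ^ j.+1)%N -> ln (n%:R / k%:R) <= j.+1%:R :> R.
Proof.
move=> k0 n0 hn.
have ratio_le : n%:R / k%:R <= 2 ^+ j.+1 :> R.
  by rewrite ler_pdivrMr ?ltr0n // -natrX -natrM ler_nat mulnC ltnW.
apply: le_trans (_ : ln (2 ^+ j.+1) <= _).
  by rewrite ler_ln ?posrE ?divr_gt0 ?ltr0n ?exprn_gt0.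
have -> : ln (2 ^+ j.+1) = ln 2 * j.+1%:R :> R by rewrite lnXn // mulr_natr.
by apply: ler_piMl => //; exact: ln2_le1.
Qed.

Lemma opt_bandit_det_ge n k r (x : Rdefinitions.R) :
  (forall L : learner n k, exists2 S, @P_r n k r S & x <= (mistakes L S)%:R) ->
  (x%:E <= opt_bandit_det n k r)%E.
Proof.
move=> adversary; apply: le_ereal_inf_tmp => _ [L _ <-].
have [S PS le_xS] := adversary L.
have : (((mistakes L S)%:R : Rdefinitions.R)%:E
    <= ereal_sup [set ((mistakes L S)%:R)%:E | S in @P_r n k r])%E.
  by apply: ereal_sup_ubound; exists S.
by apply: le_trans; rewrite lee_fin.
Qed.

Lemma opt_bandit_det_le n k r (L : learner n k) (x : Rdefinitions.R) :
  (forall S, @P_r n k r S -> (mistakes L S)%:R <= x) ->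
  (opt_bandit_det n k r <= x%:E)%E.
Proof.
move=> bound; apply: ge_ereal_inf.
exists (ereal_sup [set ((mistakes L S)%:R)%:E | S in @P_r n k r]); first by exists L.
by apply: ge_ereal_sup => _ [S PS <-]; rewrite lee_fin bound.
Qed.

Lemma opt_bandit_det_lower_bound n k r : (1 < k)%N -> (k <= n)%N ->
  ((1 / 16 * k%:R * (ln (n%:R / k%:R) + r%:R + 1))%:E <= opt_bandit_det n k r)%E.
Proof.
case: k => [|[|k]] // _ hkn; set K := k.+2; have K_gt1 : (1 < K)%N by [].
have [j lo hi] := exists_pow2_between (ltnW K_gt1) hkn.
apply: opt_bandit_det_ge => L.
have [S1 PS1 le_S1] := adversary_halving L r lo.
have [S2 PS2 le_S2] := adversary_repeated r L hkn.
have [S PS le_S] : exists2 S, @P_r n K r S & (K * (j + r + 2) <= 16 * mistakes L S)%N.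
  have sum_le : (K * (j + r + 2) <= 8 * (mistakes L S1 + mistakes L S2))%N.
    apply: leq_trans (leq_mul (leqnn 8) (leq_add le_S1 le_S2)).
    exact: halving_repeated_sum.
  case: (leqP (mistakes L S1) (mistakes L S2)) => ?.
    by exists S2 => //; lia.
  by exists S1 => //; lia.
exists S => //.
have ln_le : ln (n%:R / K%:R) <= j%:R + 1 :> Rdefinitions.R.
  by rewrite natr1 ln_ratio_le // (leq_trans (ltnW K_gt1) hkn).
have := ler_wpM2l (ler0n _ K) ln_le.
by move: le_S; rewrite -(ler_nat Rdefinitions.R) !natrM !natrD; lra.
Qed.

Lemma opt_bandit_det_upper_bound n k r : (0 < k)%N -> (k <= n)%N ->
  (opt_bandit_det n k r <= (2 * k%:R * (ln (n%:R / k%:R) + r%:R + 1))%:E)%E.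
Proof.
case: k => // k _ hkn.
apply: (@opt_bandit_det_le _ _ _ (weighted_majority r)) => S [b hb].
apply: le_trans (weighted_majority_run_le _ (h := [::]) hb) _.
rewrite total_weight_nil !natrM natrX.
by apply: potential_le_log; rewrite ?ltr0n ?ler_nat.
Qed.

Theorem theorem4p1 :
  exists c C : Rdefinitions.R, 0 < c /\ c <= C /\
    forall n k r : nat, (2 <= k)%N -> (k <= n)%N ->
      ((c * k%:R * (ln (n%:R / k%:R) + r%:R + 1))%:E <= opt_bandit_det n k r)%E /\
      (opt_bandit_det n k r <= (C * k%:R * (ln (n%:R / k%:R) + r%:R + 1))%:E)%E.
Proof.
exists (1 / 16), 2; do 2 (split; first lra).
move=> n k r hk hkn; split; first exact: opt_bandit_det_lower_bound.
by apply: opt_bandit_det_upper_bound => //; apply: ltnW.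
Qed.
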